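(* For all nonnegative integers $s$ and $n$, $$\det\Big(W^*_{m,r}[s+i+j,\,s+j]_q\Big)_{0\le i,j\le n}=\prod_{k=0}^{n}[m(s+k)+r]_q^{\,k}.$$
   Context: Fix a real number $q>0$ with $q\neq 1$, a positive integer $m$ and a complex number $r$. For complex $x$ put $q^x=e^{x\ln q}$ and $[x]_q=\frac{1-q^x}{1-q}$. The numbers $W_{m,r}[n,k]_q$, for integers $n,k$, are defined by $W_{m,r}[0,0]_q=1$, $W_{m,r}[n,k]_q=0$ whenever $n<k$ or $n<0$ or $k<0$, and, for $n\ge 1$ and $0\le k\le n$, $$W_{m,r}[n,k]_q=q^{m(k-1)+r}\,W_{m,r}[n-1,k-1]_q+[mk+r]_q\,W_{m,r}[n-1,k]_q .$$ Further, $W^*_{m,r}[n,k]_q=q^{-m\binom{k}{2}-kr}\,W_{m,r}[n,k]_q$ for $n,k\ge 0$. *)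

(* The complex numbers are built here as pairs of Stdlib reals and equipped
   with a MathComp comNzRingType structure so that MathComp's \det applies. *)
From Stdlib Require Import Reals Lra ClassicalEpsilon FunctionalExtensionality.
From HB Require Import structures.
From mathcomp Require Import all_boot all_order all_algebra.
Set Implicit Arguments. Unset Strict Implicit. Unset Printing Implicit Defensive.

Record Cpx : Type := mkC { Re : R ; Im : R }.

Definition Ceqb (x y : Cpx) : bool :=
  if Req_EM_T (Re x) (Re y) then (if Req_EM_T (Im x) (Im y) then true else false)
  else false.

Lemma Ceqb_axiom : Equality.axiom Ceqb.
Proof.
move=> [a b] [c d]; rewrite /Ceqb /=.
case: (Req_EM_T a c) => [e1|h]; last by constructor; case.
case: (Req_EM_T b d) => [e2|h]; last by constructor; case.
by constructor; rewrite e1 e2.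
Qed.
HB.instance Definition _ := hasDecEq.Build Cpx Ceqb_axiom.

Definition Cfind (P : pred Cpx) (n : nat) : option Cpx :=
  match excluded_middle_informative (exists x, P x) with
  | left h => Some (proj1_sig (constructive_indefinite_description _ h))
  | right _ => None
  end.

Lemma Cfind_correct P n x : Cfind P n = Some x -> P x.
Proof.
rewrite /Cfind; case: excluded_middle_informative => // h [<-].
exact: proj2_sig (constructive_indefinite_description _ h).
Qed.

Lemma Cfind_complete (P : pred Cpx) : (exists x, P x) -> exists n, Cfind P n.
Proof. by move=> h; exists 0%N; rewrite /Cfind; case: excluded_middle_informative. Qed.

Lemma Cfind_ext (P Q : pred Cpx) : P =1 Q -> Cfind P =1 Cfind Q.
Proof. by move=> /functional_extensionality ->. Qed.

HB.instance Definition _ :=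
  hasChoice.Build Cpx Cfind_correct Cfind_complete Cfind_ext.

Definition Czero : Cpx := mkC R0 R0.
Definition Cone : Cpx := mkC R1 R0.
Definition Cadd (x y : Cpx) : Cpx := mkC (Rplus (Re x) (Re y)) (Rplus (Im x) (Im y)).
Definition Copp (x : Cpx) : Cpx := mkC (Ropp (Re x)) (Ropp (Im x)).
Definition Cmul (x y : Cpx) : Cpx :=
  mkC (Rminus (Rmult (Re x) (Re y)) (Rmult (Im x) (Im y)))
      (Rplus (Rmult (Re x) (Im y)) (Rmult (Im x) (Re y))).

Lemma CaddA : associative Cadd.
Proof. move=> [a b] [c d] [e f]; rewrite /Cadd /=; f_equal; ring. Qed.
Lemma CaddC : commutative Cadd.
Proof. move=> [a b] [c d]; rewrite /Cadd /=; f_equal; ring. Qed.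
Lemma Cadd0 : left_id Czero Cadd.
Proof. move=> [a b]; rewrite /Cadd /=; f_equal; ring. Qed.
Lemma CaddN : left_inverse Czero Copp Cadd.
Proof. move=> [a b]; rewrite /Cadd /Czero /=; f_equal; ring. Qed.
HB.instance Definition _ := GRing.isZmodule.Build Cpx CaddA CaddC Cadd0 CaddN.

Lemma CmulA : associative Cmul.
Proof. move=> [a b] [c d] [e f]; rewrite /Cmul /=; f_equal; ring. Qed.
Lemma CmulC : commutative Cmul.
Proof. move=> [a b] [c d]; rewrite /Cmul /=; f_equal; ring. Qed.
Lemma Cmul1 : left_id Cone Cmul.
Proof. move=> [a b]; rewrite /Cmul /=; f_equal; ring. Qed.
Lemma CmulDl : left_distributive Cmul Cadd.
Proof. move=> [a b] [c d] [e f]; rewrite /Cmul /Cadd /=; f_equal; ring. Qed.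
Lemma Cone_neq0 : Cone != Czero.
Proof.
apply/negP => /eqP [] h; exact: R1_neq_R0 h.
Qed.
HB.instance Definition _ :=
  GRing.Zmodule_isComNzRing.Build Cpx CmulA CmulC Cmul1 CmulDl Cone_neq0.

Definition RtoC (a : R) : Cpx := mkC a R0.

(* q^x = e^{x ln q} for complex x:
   e^{(a+ib) ln q} = e^{a ln q} (cos (b ln q) + i sin (b ln q)). *)
Definition qpow (q : R) (x : Cpx) : Cpx :=
  mkC (Rmult (exp (Rmult (Re x) (ln q))) (cos (Rmult (Im x) (ln q))))
      (Rmult (exp (Rmult (Re x) (ln q))) (sin (Rmult (Im x) (ln q)))).

Definition qint (q : R) (x : Cpx) : Cpx :=
  GRing.mul (RtoC (Rinv (Rminus R1 q))) (GRing.add Cone (GRing.opp (qpow q x))).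

Local Open Scope ring_scope.

(* W_{m,r}[n,k]_q for n, k >= 0 (it is 0 whenever an index is negative, so the
   terms W[n-1,k-1] with k = 0 of the recurrence vanish). *)
Fixpoint W (q : R) (m : nat) (r : Cpx) (n k : nat) {struct n} : Cpx :=
  match n, k with
  | 0, 0 => 1
  | 0, _.+1 => 0
  | n'.+1, 0 => qint q (m%:R * 0%:R + r) * W q m r n' 0
  | n'.+1, k'.+1 =>
      if (n'.+1 < k'.+1)%N then 0
      else qpow q (m%:R * k'%:R + r) * W q m r n' k'
           + qint q (m%:R * k'.+1%:R + r) * W q m r n' k'.+1
  end.

Definition Wstar (q : R) (m : nat) (r : Cpx) (n k : nat) : Cpx :=
  qpow q (- (m%:R * 'C(k, 2)%:R) - k%:R * r) * W q m r n k.

From Stdlib Require Import Reals.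
From HB Require Import structures.
From mathcomp Require Import all_boot all_order all_algebra.
Import GRing.Theory.
Local Open Scope ring_scope.

(* The determinant identity is purely combinatorial: it holds for any
   triangle T over a commutative ring given by
     T 0 0 = 1,  T 0 (k+1) = 0,  T (n+1) k = T n (k-1) + a k * T n k,
   for an arbitrary weight sequence a.
   1. W^*_{m,r}[n,k]_q is such a triangle with a k = [mk+r]_q: the power of q
      normalising W^* absorbs the factor q^{m(k-1)+r} of the recurrence
      (this uses q^{x+y} = q^x q^y).
   2. Shifting the row index by p is a linear transfer,
        T (n+p) k = \sum_l T n l * P l p k,
      where P l p k is zero outside l <= k <= l+p and P l p l = a l ^+ p.
   3. Hence the matrix (T (s+i+j) (s+j))_{i,j} factors as B *m C with
      B = (T (s+i) (s+t)) unit lower triangular and C = (P (s+t) j (s+j))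
      upper triangular with diagonal a (s+j) ^+ j, which gives the product. *)

Lemma qpowD (q : R) (x y : Cpx) : qpow q (x + y) = qpow q x * qpow q y.
Proof.
change (qpow q (Cadd x y) = Cmul (qpow q x) (qpow q y)).
case: x => a b; case: y => c d; rewrite /qpow /Cadd /Cmul /=.
rewrite !Rmult_plus_distr_r exp_plus cos_plus sin_plus.
by f_equal; ring.
Qed.

Lemma qpow0 (q : R) : qpow q 0 = 1.
Proof.
change (qpow q Czero = Cone).
rewrite /qpow /Czero /Cone /= !Rmult_0_l exp_0 cos_0 sin_0.
by f_equal; ring.
Qed.

From mathcomp Require Import ring.

Section WeightedTriangle.
Variable K : comNzRingType.
Variable a : nat -> K.

Fixpoint triangle (n k : nat) : K :=
  match n, k with
  | 0, 0 => 1
  | 0, _.+1 => 0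
  | n'.+1, 0 => a 0 * triangle n' 0
  | n'.+1, k'.+1 => triangle n' k' + a k'.+1 * triangle n' k'.+1
  end.

Fixpoint transfer (l p k : nat) : K :=
  match p with
  | 0 => (l == k)%:R
  | p'.+1 => (if k is k'.+1 then transfer l p' k' else 0) + a k * transfer l p' k
  end.

Lemma triangle_gt n k : (n < k)%N -> triangle n k = 0.
Proof.
elim: n k => [|n IHn] [|k] //= ltnk.
by rewrite (IHn k) // (IHn k.+1) ?mulr0 ?addr0 // ltnW.
Qed.

Lemma triangle_diag n : triangle n n = 1.
Proof. by elim: n => //= n ->; rewrite triangle_gt // mulr0 addr0. Qed.

Lemma transfer_lt l p k : (k < l)%N -> transfer l p k = 0.
Proof.
elim: p k => [|p IHp] k ltkl /=; first by rewrite eq_sym ltn_eqF.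
rewrite IHp // mulr0 addr0; case: k ltkl => // k ltkl.
by rewrite IHp // ltnW.
Qed.

Lemma transfer_gt l p k : (l + p < k)%N -> transfer l p k = 0.
Proof.
elim: p k => [|p IHp] k; first by rewrite addn0 /= => /ltn_eqF ->.
rewrite addnS /= => ltk.
rewrite (IHp k) ?mulr0 ?addr0; last exact: ltnW.
by case: k ltk => // k ltk; rewrite IHp.
Qed.

Lemma transfer_diag l p : transfer l p l = a l ^+ p.
Proof.
elim: p => [|p IHp] /=; first by rewrite eqxx.
rewrite IHp exprS; case: l IHp => [|l] _; first by rewrite add0r.
by rewrite transfer_lt // add0r.
Qed.

Lemma triangle_delta N n k : (n < N)%N ->
  triangle n k = \sum_(l < N) triangle n l * (l == k :> nat)%:R.
Proof.
move=> ltnN; case: (ltnP k N) => [ltkN | leNk].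
  rewrite (bigD1 (Ordinal ltkN)) //= eqxx mulr1 big1 ?addr0 // => l neqlk.
  by rewrite -(inj_eq val_inj) /= in neqlk; rewrite (negbTE neqlk) mulr0.
rewrite triangle_gt ?(leq_trans ltnN) // big1 // => l _.
by rewrite ltn_eqF ?mulr0 // (leq_trans (ltn_ord l) leNk).
Qed.

Lemma triangle_shift N n p k : (n < N)%N ->
  triangle (n + p) k = \sum_(l < N) triangle n l * transfer l p k.
Proof.
move=> ltnN; elim: p k => [|p IHp] k; first by rewrite addn0 (@triangle_delta N n k ltnN).
rewrite addnS; case: k => [|k] /=.
  by rewrite IHp mulr_sumr; apply: eq_bigr => l _; ring.
rewrite !IHp mulr_sumr -big_split; apply: eq_bigr => l _ /=; ring.
Qed.

Theorem det_triangle s n :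
  \det (\matrix_(i < n.+1, j < n.+1) triangle (s + i + j) (s + j) : 'M[K]_n.+1)
  = \prod_(k < n.+1) a (s + k) ^+ k.
Proof.
set B := \matrix_(i < n.+1, t < n.+1) triangle (s + i) (s + t).
set C := \matrix_(t < n.+1, j < n.+1) transfer (s + t) j (s + j).
have factor : (\matrix_(i < n.+1, j < n.+1) triangle (s + i + j) (s + j)
                : 'M[K]_n.+1) = B *m C.
  apply/matrixP => i j; rewrite !mxE (@triangle_shift (s + n.+1)) ?ltn_add2l //.
  rewrite big_split_ord /= big1 ?add0r => [|l _]; last first.
    by rewrite transfer_gt ?mulr0 // ltn_add2r.
  by apply: eq_bigr => t _; rewrite !mxE.
have B_lower : is_trig_mx B.
  by apply/is_trig_mxP => i j ltij; rewrite mxE triangle_gt // ltn_add2l.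
have C_upper : is_trig_mx C^T.
  by apply/is_trig_mxP => i j ltij; rewrite !mxE transfer_lt // ltn_add2l.
rewrite factor det_mulmx -(det_tr C) (det_trig B_lower) (det_trig C_upper).
rewrite big1 ?mul1r => [|i _]; last by rewrite mxE triangle_diag.
by apply: eq_bigr => i _; rewrite !mxE transfer_diag.
Qed.

End WeightedTriangle.
Arguments triangle {K}.
Arguments det_triangle {K}.

Lemma Wstar_triangle (q : R) (m : nat) (r : Cpx) (n k : nat) :
  Wstar q m r n k = triangle (fun j => qint q (m%:R * j%:R + r)) n k.
Proof.
elim: n k => [|n IHn] [|k].
- by rewrite /Wstar /= mulr1 bin0n mulr0 oppr0 mul0r subr0 qpow0.
- by rewrite /Wstar /= mulr0.
- by rewrite /= -IHn /Wstar /=; ring.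
- rewrite [RHS]/= -(IHn k) -(IHn k.+1) {1}/Wstar /=; case: ifP => ltnk.
    by rewrite mulr0 !IHn !triangle_gt ?mulr0 ?addr0 // ltnW.
  rewrite /Wstar mulrDr mulrA -qpowD; congr (qpow q _ * _ + _); last by ring.
  (* -m binom(k+1,2) - (k+1) r + (mk + r) = -m binom(k,2) - k r *)
  by rewrite binS bin1 natrD; ring.
Qed.

Theorem theorem7 (q : R) (hq0 : Rlt R0 q) (hq1 : q <> R1)
  (m : nat) (hm : (0 < m)%N) (r : Cpx) (s n : nat) :
  \det (\matrix_(i < n.+1, j < n.+1) Wstar q m r (s + i + j) (s + j)
          : 'M[Cpx]_n.+1)
  = \prod_(k < n.+1) qint q (m%:R * (s + k)%:R + r) ^+ k.
Proof.
rewrite -(det_triangle (fun j => qint q (m%:R * j%:R + r))).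
by congr (\det _); apply/matrixP => i j; rewrite !mxE Wstar_triangle.
Qed.
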